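(* Let $(\mathcal{A}_G[[\lambda]],\star_G)$ be a right universal deformation of a group $G$ and let $\tau:G\times X\to X$ be a left action of $G$ on a set $X$. Define $\mathcal{A}_X$ and $\star_X$ by $(f_1\star_Xf_2)(x)=(\alpha^xf_1\star_G\alpha^xf_2)(e)$. Then: (1) $(\mathcal{A}_X[[\lambda]],\star_X)$ is an associative formal deformation of $\mathcal{A}_X$, which is Hermitian if $\star_G$ is Hermitian, and for every $x\in X$ the map $\alpha^x:(\mathcal{A}_X[[\lambda]],\star_X)\to(\mathcal{A}_G[[\lambda]],\star_G)$ is an algebra homomorphism, i.e. $\alpha^x(f_1\star_Xf_2)=\alpha^xf_1\star_G\alpha^xf_2$. (2) If $f_1\in\mathcal{A}_X[[\lambda]]$ has all coefficients constant on an orbit $G.x_0$, then $(f_1\star_Xf_2)(g.x_0)=f_1(g.x_0)f_2(g.x_0)=(f_2\star_Xf_1)(g.x_0)$ for all $f_2\in\mathcal{A}_X[[\lambda]]$ and $g\in G$; in particular, if $f_1$ is constant along every orbit, then $f_1\star_Xf_2=f_1f_2=f_2\star_Xf_1$.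
   Context: $G$ is a group with unit $e$, right translations $R_g(h)=hg$ and left translations $L_g(h)=gh$. $\mathcal A_G$ is a subalgebra of the algebra $\mathrm{Fun}(G)$ of complex-valued functions on $G$, containing $1$, closed under complex conjugation, with $R_g^*\mathcal A_G\subseteq\mathcal A_G$ for all $g$. A right universal deformation is an associative $\mathbb C[[\lambda]]$-bilinear product $\star_G$ on $\mathcal A_G[[\lambda]]$ whose zeroth order is the pointwise product, with $1\star_Gf=f=f\star_G1$, and such that $R_g^*(f_1\star_Gf_2)=R_g^*f_1\star_GR_g^*f_2$ for all $g\in G$. It is Hermitian if $\overline{f_1\star_Gf_2}=\overline{f_2}\star_G\overline{f_1}$ ($\lambda$ real). For the action write $g.x=\tau(g,x)$, $\tau_g=\tau(g,\cdot)$, and define $\alpha^x:\mathrm{Fun}(X)\to\mathrm{Fun}(G)$ by $(\alpha^xf)(g)=f(g.x)=(\tau_g^*f)(x)$, extended $\mathbb C[[\lambda]]$-linearly. $\mathcal A_X=\{f\in\mathrm{Fun}(X):\alpha^xf\in\mathcal A_G\text{ for all }x\in X\}$. *)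

From HB Require Import structures.
From mathcomp Require Import all_boot all_order all_algebra.
From mathcomp Require Import reals complex.
Set Implicit Arguments. Unset Strict Implicit. Unset Printing Implicit Defensive.
Import GRing.Theory Num.Theory.
Local Open Scope ring_scope.
Local Open Scope complex_scope.

(* Complex numbers are modelled as R[i] for a real field R : realType.
   Fun(T)[[lambda]] is modelled as  nat -> T -> R[i]  : the n-th coefficient
   of f is the function  f n : T -> C.                                     *)

Section Series.
Variable R : realType.
Local Notation C := (R[i]).

Definition ser (T : Type) := nat -> T -> C.

Variable T : Type.

Definition ser_add (f1 f2 : ser T) : ser T := fun n t => f1 n t + f2 n t.

(* multiplication by a scalar a in C[[lambda]] (Cauchy product) *)
Definition ser_scale (a : nat -> C) (f : ser T) : ser T :=
  fun n t => \sum_(i < n.+1) a i * f (n - i)%N t.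

Definition ser_mul (f1 f2 : ser T) : ser T :=
  fun n t => \sum_(i < n.+1) f1 i t * f2 (n - i)%N t.

Definition ser_one : ser T := fun n _ => if n == 0%N then 1 else 0.

(* coefficientwise complex conjugation (lambda real) *)
Definition ser_conj (f : ser T) : ser T := fun n t => (f n t)^*.

Definition in_ser (A : (T -> C) -> Prop) (f : ser T) : Prop := forall n, A (f n).

Definition is_formal_deformation (A : (T -> C) -> Prop)
    (star : ser T -> ser T -> ser T) : Prop :=
  [/\ (forall f1 f2, in_ser A f1 -> in_ser A f2 -> in_ser A (star f1 f2)),
      ((forall f1 f1' f2, in_ser A f1 -> in_ser A f1' -> in_ser A f2 ->
          star (ser_add f1 f1') f2 = ser_add (star f1 f2) (star f1' f2)) /\
      (forall f1 f2 f2', in_ser A f1 -> in_ser A f2 -> in_ser A f2' ->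
          star f1 (ser_add f2 f2') = ser_add (star f1 f2) (star f1 f2')) /\
      (forall (a : nat -> C) f1 f2, in_ser A f1 -> in_ser A f2 ->
          star (ser_scale a f1) f2 = ser_scale a (star f1 f2)) /\
      (forall (a : nat -> C) f1 f2, in_ser A f1 -> in_ser A f2 ->
          star f1 (ser_scale a f2) = ser_scale a (star f1 f2))),
      (forall f1 f2 f3, in_ser A f1 -> in_ser A f2 -> in_ser A f3 ->
          star (star f1 f2) f3 = star f1 (star f2 f3)),
      (forall f1 f2, in_ser A f1 -> in_ser A f2 ->
          star f1 f2 0%N = (fun t => f1 0%N t * f2 0%N t)) &
      (forall f, in_ser A f -> star ser_one f = f /\ star f ser_one = f)].

Definition is_hermitian (A : (T -> C) -> Prop)
    (star : ser T -> ser T -> ser T) : Prop :=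
  forall f1 f2, in_ser A f1 -> in_ser A f2 ->
    ser_conj (star f1 f2) = star (ser_conj f2) (ser_conj f1).

End Series.

Section Group.
Variable R : realType.
Local Notation C := (R[i]).
Variable G : groupType.

Definition rtrans (g : G) (u : G -> C) : G -> C := fun h => u (h * g)%g.
Definition ser_rtrans (g : G) (f : ser R G) : ser R G := fun n => rtrans g (f n).

Definition admissible_algebra (AG : (G -> C) -> Prop) : Prop :=
  [/\ AG (fun _ => 1),
      (forall u v, AG u -> AG v -> AG (fun g => u g + v g)) /\
      (forall (c : C) u, AG u -> AG (fun g => c * u g)),
      (forall u v, AG u -> AG v -> AG (fun g => u g * v g)),
      (forall u, AG u -> AG (fun g => (u g)^*)) &
      (forall g u, AG u -> AG (rtrans g u))].

Definition is_right_universal_deformation (AG : (G -> C) -> Prop)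
    (star : ser R G -> ser R G -> ser R G) : Prop :=
  is_formal_deformation AG star /\
  forall g f1 f2, in_ser AG f1 -> in_ser AG f2 ->
    ser_rtrans g (star f1 f2) = star (ser_rtrans g f1) (ser_rtrans g f2).

Variable X : Type.

Definition is_left_action (tau : G -> X -> X) : Prop :=
  (forall x, tau 1%g x = x) /\ (forall g h x, tau g (tau h x) = tau (g * h)%g x).

Definition alpha (tau : G -> X -> X) (x : X) (f : ser R X) : ser R G :=
  fun n g => f n (tau g x).

Definition AX (AG : (G -> C) -> Prop) (tau : G -> X -> X) : (X -> C) -> Prop :=
  fun u => forall x, AG (fun g => u (tau g x)).

Definition starX (star : ser R G -> ser R G -> ser R G) (tau : G -> X -> X)
    (f1 f2 : ser R X) : ser R X :=
  fun n x => star (alpha tau x f1) (alpha tau x f2) n 1%g.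

End Group.

From HB Require Import structures.
From mathcomp Require Import all_boot all_order all_algebra.
From mathcomp Require Import reals complex.
From Stdlib Require Import FunctionalExtensionality.
Import GRing.Theory Num.Theory.
Local Open Scope ring_scope.

(* Since [alpha^(g.x) f = R_g^* (alpha^x f)], right invariance of [*_G] makes
   [alpha^x] multiplicative: [(f1 *_X f2)(g.x)] is the value at [e] of
   [R_g^*(alpha^x f1 *_G alpha^x f2)].  Every axiom of [*_G] then transfers to
   [*_X] by evaluating at [e].  On an orbit where [f1] is constant,
   [alpha^(g.x0) f1] is a scalar multiple of [1], so the unit and
   [C[[lambda]]]-linearity axioms reduce [*_X] to the pointwise product. *)

Lemma ser_ext (R : realType) (T : Type) (f g : ser R T) :
  (forall n t, f n t = g n t) -> f = g.
Proof.
move=> fg; apply: functional_extensionality => n.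
exact: functional_extensionality.
Qed.

Lemma ser_scale_one (R : realType) (T : Type) (c : nat -> R[i]) :
  ser_scale c (@ser_one R T) = fun n _ => c n.
Proof.
apply: ser_ext => n t.
rewrite /ser_scale /ser_one big_ord_recr /= subnn eqxx mulr1 big1 ?add0r //.
by move=> i _; rewrite subn_eq0 leqNgt ltn_ord mulr0.
Qed.

Lemma in_ser_one (R : realType) (G : groupType) (AG : (G -> R[i]) -> Prop) :
  admissible_algebra AG -> in_ser AG (@ser_one R G).
Proof.
case=> AG1 [_ AGscale] _ _ _ n; rewrite /ser_one.
case: (n == 0)%N; first exact: AG1.
have -> : (fun _ : G => (0 : R[i])) = (fun _ => 0 * 1).
  by apply: functional_extensionality => g; rewrite mul0r.
exact: AGscale.
Qed.

Section InducedProduct.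

Local Set Implicit Arguments.

Variables (R : realType) (G : groupType) (X : Type).
Variables (AG : (G -> R[i]) -> Prop) (starG : ser R G -> ser R G -> ser R G).
Variable tau : G -> X -> X.
Hypothesis starG_rud : is_right_universal_deformation AG starG.
Hypothesis tau_action : is_left_action tau.

Local Notation AX := (AX AG tau).
Local Notation starX := (starX starG tau).
Local Notation alpha := (alpha tau).

Lemma in_ser_alpha x {f} : in_ser AX f -> in_ser AG (alpha x f).
Proof. by move=> Hf n; apply: Hf. Qed.

Lemma alpha_act g x (f : ser R X) :
  alpha (tau g x) f = ser_rtrans g (alpha x f).
Proof.
case: tau_action => _ tauM.
by apply: ser_ext => n h; rewrite /alpha /ser_rtrans /rtrans tauM.
Qed.

Lemma alpha_starX x f1 f2 : in_ser AX f1 -> in_ser AX f2 ->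
  alpha x (starX f1 f2) = starG (alpha x f1) (alpha x f2).
Proof.
case: starG_rud => _ starG_rtrans Hf1 Hf2.
apply: ser_ext => n g.
rewrite /alpha /starX -/(alpha (tau g x) f1) -/(alpha (tau g x) f2) !alpha_act.
rewrite -starG_rtrans; try exact: in_ser_alpha.
by rewrite /ser_rtrans /rtrans mul1g.
Qed.

Lemma alpha_add x (f1 f2 : ser R X) :
  alpha x (ser_add f1 f2) = ser_add (alpha x f1) (alpha x f2).
Proof. by []. Qed.

Lemma alpha_scale x a (f : ser R X) :
  alpha x (ser_scale a f) = ser_scale a (alpha x f).
Proof. by []. Qed.

Lemma alpha_one x : alpha x (@ser_one R X) = @ser_one R G.
Proof. by []. Qed.

Lemma alpha_unit x (f : ser R X) n : alpha x f n 1%g = f n x.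
Proof. by case: tau_action => tau1 _; rewrite /alpha tau1. Qed.

Lemma starX_eval f1 f2 n x :
  starX f1 f2 n x = starG (alpha x f1) (alpha x f2) n 1%g.
Proof. by []. Qed.

Lemma in_ser_starX f1 f2 : in_ser AX f1 -> in_ser AX f2 -> in_ser AX (starX f1 f2).
Proof.
case: starG_rud => -[starG_closed _ _ _ _] _ Hf1 Hf2 n x.
change (AG (alpha x (starX f1 f2) n)).
by rewrite alpha_starX //; apply: starG_closed; apply: in_ser_alpha.
Qed.

Lemma starX_is_formal_deformation : is_formal_deformation AX starX.
Proof.
case: (starG_rud) => -[_ [addl [addr [scalel scaler]]] assoc star0 star1] _.
split; first exact: in_ser_starX.
- split; [|split; [|split]] => [f1 f1' f2|f1 f2 f2'|a f1 f2|a f1 f2] *;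
    apply: ser_ext => n x; rewrite !starX_eval.
  + by rewrite alpha_add addl //; apply: in_ser_alpha.
  + by rewrite alpha_add addr //; apply: in_ser_alpha.
  + by rewrite alpha_scale scalel //; apply: in_ser_alpha.
  + by rewrite alpha_scale scaler //; apply: in_ser_alpha.
- move=> f1 f2 f3 Hf1 Hf2 Hf3; apply: ser_ext => n x; rewrite !starX_eval.
  by rewrite !alpha_starX ?in_ser_starX // assoc //; apply: in_ser_alpha.
- move=> f1 f2 Hf1 Hf2; apply: functional_extensionality => x.
  by rewrite starX_eval star0 ?alpha_unit //; apply: in_ser_alpha.
- move=> f Hf; split; apply: ser_ext => n x; rewrite starX_eval alpha_one.
  + by rewrite (proj1 (star1 _ (in_ser_alpha x Hf))) alpha_unit.
  + by rewrite (proj2 (star1 _ (in_ser_alpha x Hf))) alpha_unit.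
Qed.

Lemma starX_is_hermitian : is_hermitian AG starG -> is_hermitian AX starX.
Proof.
move=> starG_herm f1 f2 Hf1 Hf2.
apply: ser_ext => n x.
have := congr1 (fun F => F n 1%g)
  (starG_herm _ _ (in_ser_alpha x Hf1) (in_ser_alpha x Hf2)).
by rewrite /ser_conj /= => ->.
Qed.

Section OrbitConstant.

Hypothesis AG_admissible : admissible_algebra AG.
Context {x0 : X} {f1 : ser R X}.
Hypothesis f1_orbit_const : forall n g g', f1 n (tau g x0) = f1 n (tau g' x0).

Lemma alpha_orbit_const g :
  alpha (tau g x0) f1 = ser_scale (fun n => f1 n (tau g x0)) (@ser_one R G).
Proof.
case: tau_action => _ tauM; rewrite ser_scale_one.
by apply: ser_ext => n h; rewrite /alpha tauM (f1_orbit_const n (h * g)%g g).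
Qed.

Lemma starX_orbit_const_l g f2 n : in_ser AX f2 ->
  starX f1 f2 n (tau g x0) = ser_mul f1 f2 n (tau g x0).
Proof.
case: starG_rud => -[_ [_ [_ [scalel _]]] _ _ star1] _ Hf2.
have Ha2 := in_ser_alpha (tau g x0) Hf2.
rewrite starX_eval alpha_orbit_const scalel //; last exact: in_ser_one.
rewrite (proj1 (star1 _ Ha2)) /ser_scale /ser_mul.
by apply: eq_bigr => i _; rewrite alpha_unit.
Qed.

Lemma starX_orbit_const_r g f2 n : in_ser AX f2 ->
  starX f2 f1 n (tau g x0) = ser_mul f1 f2 n (tau g x0).
Proof.
case: starG_rud => -[_ [_ [_ [_ scaler]]] _ _ star1] _ Hf2.
have Ha2 := in_ser_alpha (tau g x0) Hf2.
rewrite starX_eval alpha_orbit_const scaler //; last exact: in_ser_one.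
rewrite (proj2 (star1 _ Ha2)) /ser_scale /ser_mul.
by apply: eq_bigr => i _; rewrite alpha_unit.
Qed.

End OrbitConstant.

End InducedProduct.

Theorem proposition7p1 (R : realType) (G : groupType) (X : Type)
    (AG : (G -> R[i]) -> Prop) (starG : ser R G -> ser R G -> ser R G)
    (tau : G -> X -> X) :
  admissible_algebra AG ->
  is_right_universal_deformation AG starG ->
  is_left_action tau ->
  (* (1) *)
  (is_formal_deformation (AX AG tau) (starX starG tau)
   /\ (is_hermitian AG starG -> is_hermitian (AX AG tau) (starX starG tau))
   /\ (forall x f1 f2, in_ser (AX AG tau) f1 -> in_ser (AX AG tau) f2 ->
         alpha tau x (starX starG tau f1 f2)
         = starG (alpha tau x f1) (alpha tau x f2)))
  /\
  (* (2) *)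
  (forall x0 f1, in_ser (AX AG tau) f1 ->
     (forall n g g', f1 n (tau g x0) = f1 n (tau g' x0)) ->
     forall f2 g, in_ser (AX AG tau) f2 ->
       (fun n => starX starG tau f1 f2 n (tau g x0))
         = (fun n => ser_mul f1 f2 n (tau g x0))
       /\ (fun n => starX starG tau f2 f1 n (tau g x0))
         = (fun n => ser_mul f1 f2 n (tau g x0)))
  /\
  (forall f1, in_ser (AX AG tau) f1 ->
     (forall n g x, f1 n (tau g x) = f1 n x) ->
     forall f2, in_ser (AX AG tau) f2 ->
       starX starG tau f1 f2 = ser_mul f1 f2
       /\ starX starG tau f2 f1 = ser_mul f1 f2).
Proof.
move=> AG_adm starG_rud tau_action.
split; [split; [|split] | split].
- exact: starX_is_formal_deformation.
- exact: starX_is_hermitian.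
- by move=> x f1 f2; apply: alpha_starX.
- move=> x0 f1 _ f1_const f2 g Hf2.
  split; apply: functional_extensionality => n.
  + exact: (starX_orbit_const_l starG_rud tau_action AG_adm f1_const g n Hf2).
  + exact: (starX_orbit_const_r starG_rud tau_action AG_adm f1_const g n Hf2).
- move=> f1 _ f1_inv f2 Hf2.
  have f1_const x n g g' : f1 n (tau g x) = f1 n (tau g' x) by rewrite !f1_inv.
  case: (tau_action) => tau1 _.
  split; apply: ser_ext => n x; rewrite -(tau1 x).
  + exact: (starX_orbit_const_l starG_rud tau_action AG_adm (f1_const x) 1%g n Hf2).
  + exact: (starX_orbit_const_r starG_rud tau_action AG_adm (f1_const x) 1%g n Hf2).
Qed.
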